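(* For the SVIQS system, let $\widetilde R_0=\frac{1}{\langle k\rangle}\sum_{i=1}^n\frac{\lambda(i)\varphi(i)p(i)\Lambda_i}{d(\gamma+\beta+d)}$ (the value of $R_0$ when all $\mu_k=0$). If $\widetilde R_0<1$, then the disease-free equilibrium $E^0$ is globally asymptotically stable: it is Lyapunov stable, and every solution with initial data satisfying $S_k(0),V_k(0),I_k(0),Q_k(0)\ge0$ and $S_k(0)+V_k(0)+I_k(0)+Q_k(0)=N_k^*$ for all $k$ converges to $E^0$ as $t\to\infty$.
   Context: Fix an integer $n\ge1$ and numbers $p(1),\dots,p(n)>0$ with $\sum_{k=1}^n p(k)=1$; set $\langle k\rangle=\sum_{k=1}^n kp(k)$. Fix constants $b>d>0$ and let $\Phi^*>0$ satisfy $\Phi^*=\frac{1}{\langle k\rangle}\sum_{i=1}^n \frac{i\,p(i)\,b\Phi^*}{d+bi\Phi^*}$. For $k=1,\dots,n$ put $N_k^*=\frac{bk\Phi^*}{d+bk\Phi^*}\in(0,1)$ and $\Lambda_k=bk(1-N_k^* )\Phi^*$ (so $\Lambda_k=dN_k^*>0$). Parameters: $\lambda(k)>0$, $\varphi(k)>0$, $\mu_k>0$ for $k=1,\dots,n$; constants $\beta,\gamma,\eta,\omega>0$ and $\delta\in[0,1]$. For functions $I_1(t),\dots,I_n(t)$ set $\Theta(t)=\frac{1}{\langle k\rangle}\sum_{i=1}^n\varphi(i)p(i)I_i(t)$. The SVIQS system is, for $k=1,\dots,n$: $S_k'=\Lambda_k-\lambda(k)S_k\Theta+\gamma I_k+\eta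 Q_k+\omega V_k-(\mu_k+d)S_k$, $V_k'=\mu_kS_k-\delta\lambda(k)V_k\Theta-(d+\omega)V_k$, $I_k'=\lambda(k)S_k\Theta+\delta\lambda(k)V_k\Theta-(\gamma+\beta+d)I_k$, $Q_k'=\beta I_k-(\eta+d)Q_k$. Its disease-free equilibrium $E^0$ is $S_k^0=\frac{(d+\omega)N_k^*}{\mu_k+\omega+d}$, $V_k^0=\frac{\mu_kN_k^*}{\mu_k+\omega+d}$, $I_k^0=Q_k^0=0$. *)

From Stdlib Require Import Reals Lra.
Open Scope R_scope.

(* sumk n f = f 1 + f 2 + ... + f n  (indices k = 1..n, as in the paper) *)
Fixpoint sumk (n : nat) (f : nat -> R) : R :=
  match n with
  | O => 0
  | S m => sumk m f + f (S m)
  end.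

Definition avgk (n : nat) (p : nat -> R) : R := sumk n (fun k => INR k * p k).

Definition Nstar (b d Phi : R) (k : nat) : R :=
  b * INR k * Phi / (d + b * INR k * Phi).

Definition Lam (b d Phi : R) (k : nat) : R :=
  b * INR k * (1 - Nstar b d Phi k) * Phi.

Definition Theta (n : nat) (p phi : nat -> R) (I : nat -> R -> R) (t : R) : R :=
  / avgk n p * sumk n (fun i => phi i * p i * I i t).

Definition S0 (b d Phi omega : R) (mu : nat -> R) (k : nat) : R :=
  (d + omega) * Nstar b d Phi k / (mu k + omega + d).
Definition V0 (b d Phi omega : R) (mu : nat -> R) (k : nat) : R :=
  mu k * Nstar b d Phi k / (mu k + omega + d).

Definition R0tilde (n : nat) (p lam phi : nat -> R) (b d Phi beta gamma : R) : R :=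
  / avgk n p * sumk n (fun i =>
     lam i * phi i * p i * Lam b d Phi i / (d * (gamma + beta + d))).

Definition right_cont0 (X : R -> R) : Prop :=
  forall eps, 0 < eps -> exists del, 0 < del /\
    forall t, 0 <= t < del -> Rabs (X t - X 0) < eps.

Definition is_solution (n : nat) (p lam phi mu : nat -> R)
    (b d Phi beta gamma eta omega delta : R)
    (S V I Q : nat -> R -> R) : Prop :=
  forall k, (1 <= k <= n)%nat ->
    right_cont0 (S k) /\ right_cont0 (V k) /\ right_cont0 (I k) /\ right_cont0 (Q k) /\
    forall t, 0 < t ->
      derivable_pt_lim (S k) t
        (Lam b d Phi k - lam k * S k t * Theta n p phi I t + gamma * I k t
         + eta * Q k t + omega * V k t - (mu k + d) * S k t) /\
      derivable_pt_lim (V k) t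
        (mu k * S k t - delta * lam k * V k t * Theta n p phi I t - (d + omega) * V k t) /\
      derivable_pt_lim (I k) t
        (lam k * S k t * Theta n p phi I t + delta * lam k * V k t * Theta n p phi I t
         - (gamma + beta + d) * I k t) /\
      derivable_pt_lim (Q k) t (beta * I k t - (eta + d) * Q k t).

Definition admissible_init (n : nat) (b d Phi : R) (S V I Q : nat -> R -> R) : Prop :=
  forall k, (1 <= k <= n)%nat ->
    0 <= S k 0 /\ 0 <= V k 0 /\ 0 <= I k 0 /\ 0 <= Q k 0 /\
    S k 0 + V k 0 + I k 0 + Q k 0 = Nstar b d Phi k.

Definition near_E0 (n : nat) (b d Phi omega : R) (mu : nat -> R)
    (S V I Q : nat -> R -> R) (r t : R) : Prop :=
  forall k, (1 <= k <= n)%nat ->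
    Rabs (S k t - S0 b d Phi omega mu k) < r /\
    Rabs (V k t - V0 b d Phi omega mu k) < r /\
    Rabs (I k t) < r /\ Rabs (Q k t) < r.

(* Each degree class keeps its total size, [S_k + V_k + I_k + Q_k = N_k^*], and a barrier
   argument (comparison with [-eps e^{L t}]) shows that the nonnegative orthant is invariant.
   Since then [S_k + delta V_k <= N_k^*], the weighted infected mass
   [W = sum_i phi(i) p(i) I_i] satisfies [W' <= -(gamma + beta + d)(1 - R0tilde) W] and decays
   exponentially.  This decay propagates through the linear equations for [Q_k], [V_k - V_k^0]
   and, by conservation, [S_k - S_k^0], giving a bound [D C e^{-r t}] in terms of the initial
   distance [D]; it yields both stability and attractivity of [E^0]. *)

From Stdlib Require Import Reals Lra Lia Psatz Classical.
Open Scope R_scope.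

Lemma derivable_pt_lim_value f x l l' :
  derivable_pt_lim f x l -> l = l' -> derivable_pt_lim f x l'.
Proof. now intros H <-. Qed.

Lemma derivable_pt_lim_exp_scal c x :
  derivable_pt_lim (fun t => exp (c * t)) x (c * exp (c * x)).
Proof.
  apply (derivable_pt_lim_value _ _ (exp (c * x) * c)); [|ring].
  apply (derivable_pt_lim_comp (fun t => c * t) exp); [|apply derivable_pt_lim_exp].
  apply (derivable_pt_lim_value _ _ (c * 1)); [|ring].
  apply derivable_pt_lim_scal, derivable_pt_lim_id.
Qed.

Lemma derivable_pt_lim_continuity_pt f x l :
  derivable_pt_lim f x l -> continuity_pt f x.
Proof. intro H. apply derivable_continuous_pt. now exists l. Qed.

Lemma exp_scal_le_1 c t : c <= 0 -> 0 <= t -> exp (c * t) <= 1.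
Proof.
  intros Hc Ht. rewrite <- exp_0.
  destruct (Req_dec (c * t) 0) as [->|]; [lra|]. left; apply exp_increasing; nra.
Qed.

Lemma Rdiv_nonneg a b : 0 <= a -> 0 < b -> 0 <= a / b.
Proof. intros. apply Rmult_le_pos; [lra|left; now apply Rinv_0_lt_compat]. Qed.

Lemma Rdiv_succ_mul_lt eps C x : 0 < eps -> 0 <= C -> 0 <= x <= 1 -> eps / (C + 1) * C * x < eps.
Proof.
  intros Heps HC Hx. assert (Hq : eps / (C + 1) * C < eps).
  { apply (Rmult_lt_reg_r (C + 1)); [lra|].
    replace (eps / (C + 1) * C * (C + 1)) with (eps * C) by (field; lra). nra. }
  assert (0 <= eps / (C + 1) * C) by (apply Rmult_le_pos; [apply Rdiv_nonneg|]; lra). nra.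
Qed.

Lemma exp_decay_eventually_lt C r eps :
  0 <= C -> 0 < r -> 0 < eps -> exists T, forall t, T <= t -> C * exp (- r * t) < eps.
Proof.
  intros HC Hr Heps. exists (ln ((C + 1) / eps) / r). intros t Ht.
  assert (Hpos : 0 < (C + 1) / eps) by (apply Rdiv_lt_0_compat; lra).
  assert (Hle : exp (- r * t) <= eps / (C + 1)).
  { replace (eps / (C + 1)) with (exp (- r * (ln ((C + 1) / eps) / r))).
    - destruct (Req_dec t (ln ((C + 1) / eps) / r)) as [->|]; [lra|].
      left; apply exp_increasing; nra.
    - replace (- r * (ln ((C + 1) / eps) / r)) with (- ln ((C + 1) / eps)) by (field; lra).
      rewrite exp_Ropp, exp_ln by exact Hpos. field. lra. }
  assert (C * exp (- r * t) <= C * (eps / (C + 1))) by (apply Rmult_le_compat_l; lra).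
  pose proof (Rdiv_succ_mul_lt eps C 1 Heps HC ltac:(lra)).
  replace (eps / (C + 1) * C * 1) with (C * (eps / (C + 1))) in H0 by ring. lra.
Qed.

Lemma Rabs_le_bounds a c : Rabs a <= c -> - c <= a <= c.
Proof.
  intros H. pose proof (Rle_abs a). pose proof (Rle_abs (- a)). rewrite Rabs_Ropp in *. lra.
Qed.

Lemma mul_ge_neg_bound a A y M : 0 <= a <= A -> 0 <= M -> - M <= y -> - (A * M) <= a * y.
Proof.
  intros Ha HM Hy.
  assert (0 <= a * (y + M)) by (apply Rmult_le_pos; lra).
  assert (0 <= (A - a) * M) by (apply Rmult_le_pos; lra). nra.
Qed.

Lemma mul_ge_box_bound x y e c : 0 < e -> 0 < c ->
  - e <= x <= 4 -> - (e * c) <= y <= 4 * c -> - (4 * e * c) <= x * y.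
Proof.
  intros He Hc Hx Hy. destruct (Rle_or_lt 0 x).
  - assert (0 <= x * (y + e * c)) by (apply Rmult_le_pos; lra).
    assert (0 <= (4 - x) * (e * c)) by (apply Rmult_le_pos; nra). nra.
  - assert (0 <= - x * (4 * c - y)) by (apply Rmult_le_pos; lra).
    assert (0 <= (x + e) * (4 * c)) by (apply Rmult_le_pos; lra). nra.
Qed.

Lemma sumk_ext n f g :
  (forall k, (1 <= k <= n)%nat -> f k = g k) -> sumk n f = sumk n g.
Proof.
  induction n as [|n IH]; simpl; intros H; [reflexivity|].
  rewrite IH, H by (intros; try apply H; lia). reflexivity.
Qed.

Lemma sumk_le n f g :
  (forall k, (1 <= k <= n)%nat -> f k <= g k) -> sumk n f <= sumk n g.
Proof.
  induction n as [|n IH]; simpl; intros H; [lra|].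
  apply Rplus_le_compat; [apply IH; intros; apply H|apply H]; lia.
Qed.

Lemma sumk_plus n f g : sumk n (fun k => f k + g k) = sumk n f + sumk n g.
Proof. induction n as [|n IH]; simpl; [ring|rewrite IH; ring]. Qed.

Lemma sumk_scal n c f : sumk n (fun k => c * f k) = c * sumk n f.
Proof. induction n as [|n IH]; simpl; [ring|rewrite IH; ring]. Qed.

Lemma sumk_nonneg n f :
  (forall k, (1 <= k <= n)%nat -> 0 <= f k) -> 0 <= sumk n f.
Proof.
  intros H. replace 0 with (sumk n (fun _ => 0 * 0)).
  - apply sumk_le. intros k Hk. rewrite Rmult_0_l. now apply H.
  - rewrite sumk_scal. ring.
Qed.

Lemma sumk_pos n f :
  (1 <= n)%nat -> (forall k, (1 <= k <= n)%nat -> 0 < f k) -> 0 < sumk n f.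
Proof.
  destruct n as [|n]; [lia|]. intros _ H. simpl.
  assert (0 <= sumk n f) by (apply sumk_nonneg; intros; apply Rlt_le, H; lia).
  assert (0 < f (S n)) by (apply H; lia). lra.
Qed.

Lemma sumk_term_le n f k :
  (forall j, (1 <= j <= n)%nat -> 0 <= f j) -> (1 <= k <= n)%nat -> f k <= sumk n f.
Proof.
  induction n as [|n IH]; intros H Hk; [lia|]. simpl.
  destruct (Nat.eq_dec k (S n)) as [->|Hne].
  - assert (0 <= sumk n f) by (apply sumk_nonneg; intros; apply H; lia). lra.
  - assert (f k <= sumk n f) by (apply IH; [intros; apply H|]; lia).
    assert (0 <= f (S n)) by (apply H; lia). lra.
Qed.

Lemma derivable_pt_lim_sumk n (f : nat -> R -> R) f' x :
  (forall k, (1 <= k <= n)%nat -> derivable_pt_lim (f k) x (f' k)) ->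
  derivable_pt_lim (fun t => sumk n (fun k => f k t)) x (sumk n f').
Proof.
  induction n as [|n IH]; intros H; simpl.
  - apply derivable_pt_lim_const.
  - apply derivable_pt_lim_plus; [apply IH; intros|]; apply H; lia.
Qed.

Lemma right_cont0_limit1_in X : right_cont0 X <-> limit1_in X (fun t => 0 <= t) (X 0) 0.
Proof.
  unfold right_cont0, limit1_in, limit_in; simpl; unfold R_dist; split.
  - intros H eps He. destruct (H eps He) as [del [Hdel H2]]. exists del; split; [exact Hdel|].
    intros x [Hx Hx2]. apply H2. rewrite Rminus_0_r, Rabs_right in Hx2; lra.
  - intros H eps He. destruct (H eps He) as [del [Hdel H2]]. exists del; split; [exact Hdel|].
    intros t Ht. apply H2. rewrite Rminus_0_r, Rabs_right; lra.
Qed.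

Lemma right_cont0_plus f g :
  right_cont0 f -> right_cont0 g -> right_cont0 (fun t => f t + g t).
Proof. rewrite !right_cont0_limit1_in. apply limit_plus. Qed.

Lemma right_cont0_mult f g :
  right_cont0 f -> right_cont0 g -> right_cont0 (fun t => f t * g t).
Proof. rewrite !right_cont0_limit1_in. apply limit_mul. Qed.

Lemma right_cont0_const c : right_cont0 (fun _ => c).
Proof. intros eps He. exists 1. split; [lra|]. intros. rewrite Rminus_diag, Rabs_R0; lra. Qed.

Lemma right_cont0_scal c f : right_cont0 f -> right_cont0 (fun t => c * f t).
Proof. intros; apply right_cont0_mult; auto using right_cont0_const. Qed.

Lemma right_cont0_opp f : right_cont0 f -> right_cont0 (fun t => - f t).
Proof. rewrite !right_cont0_limit1_in. apply limit_Ropp. Qed.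

Lemma right_cont0_minus f g :
  right_cont0 f -> right_cont0 g -> right_cont0 (fun t => f t - g t).
Proof. intros; apply right_cont0_plus; auto using right_cont0_opp. Qed.

Lemma right_cont0_of_continuity_pt f : continuity_pt f 0 -> right_cont0 f.
Proof.
  intros H eps He. destruct (H eps He) as [del [Hdel H2]]. exists del; split; [exact Hdel|].
  intros t Ht. destruct (Req_dec t 0) as [->|Hne].
  - rewrite Rminus_diag, Rabs_R0; lra.
  - apply H2. split; [split; [exact I|auto]|]. simpl; unfold R_dist; rewrite Rabs_right; lra.
Qed.

Lemma right_cont0_exp_scal c : right_cont0 (fun t => exp (c * t)).
Proof.
  apply right_cont0_of_continuity_pt, (derivable_pt_lim_continuity_pt _ _ (c * exp (c * 0))).
  apply derivable_pt_lim_exp_scal.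
Qed.

Lemma right_cont0_sumk n (f : nat -> R -> R) :
  (forall k, (1 <= k <= n)%nat -> right_cont0 (f k)) ->
  right_cont0 (fun t => sumk n (fun k => f k t)).
Proof.
  induction n as [|n IH]; intros H; simpl; [apply right_cont0_const|].
  apply right_cont0_plus; [apply IH; intros|]; apply H; lia.
Qed.

(** * Differential inequalities *)

Lemma nonincreasing_from_0 h h' :
  right_cont0 h ->
  (forall t, 0 < t -> derivable_pt_lim h t (h' t)) ->
  (forall t, 0 < t -> h' t <= 0) ->
  forall t, 0 <= t -> h t <= h 0.
Proof.
  intros Hc Hd Hn t Ht.
  destruct (Req_dec t 0) as [->|Hne]; [lra|].
  assert (Hst : forall s, 0 < s < t -> h t <= h s).
  { intros s Hs. destruct (MVT_cor2 h h' s t) as [c [Hc1 Hc2]]; [lra| |].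
    - intros c Hc'. apply Hd. lra.
    - assert (h' c <= 0) by (apply Hn; lra). nra. }
  apply Rnot_lt_le. intro Hlt.
  destruct (Hc (h t - h 0)) as [del [Hdel H2]]; [lra|].
  set (s := Rmin (del / 2) (t / 2)).
  assert (0 < s) by (apply Rmin_pos; lra).
  assert (s <= del / 2) by apply Rmin_l. assert (s <= t / 2) by apply Rmin_r.
  specialize (H2 s ltac:(lra)). specialize (Hst s ltac:(lra)).
  apply Rabs_def2 in H2. lra.
Qed.

(* The proof compares [x] with [Z e^{-rho t}] through the nonincreasing function
   [(x t - Z e^{-rho t}) e^{a t}]. *)
Lemma exp_decay_comparison x x' a K rho :
  right_cont0 x ->
  (forall t, 0 < t -> derivable_pt_lim x t (x' t)) ->
  (forall t, 0 < t -> x' t <= - a * x t + K * exp (- rho * t)) ->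
  0 <= rho < a -> 0 <= K ->
  forall t, 0 <= t -> x t <= (Rmax (x 0) 0 + K / (a - rho)) * exp (- rho * t).
Proof.
  intros Hc Hd Hb Hr HK t Ht.
  set (Z := Rmax (x 0) 0 + K / (a - rho)).
  set (h := fun t => (x t - Z * exp (- rho * t)) * exp (a * t)).
  assert (HKa : 0 <= K / (a - rho)) by (apply Rdiv_nonneg; lra).
  assert (HZ : K <= (a - rho) * Z).
  { assert (0 <= Rmax (x 0) 0) by apply Rmax_r.
    assert (K / (a - rho) * (a - rho) = K) by (field; lra). unfold Z. nra. }
  assert (Hh0 : h 0 <= 0).
  { unfold h. rewrite !Rmult_0_r, exp_0. assert (x 0 <= Rmax (x 0) 0) by apply Rmax_l.
    unfold Z. lra. }
  assert (Hm : h t <= h 0).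
  { apply (nonincreasing_from_0 h (fun t => (x' t + rho * Z * exp (- rho * t)) * exp (a * t)
        + (x t - Z * exp (- rho * t)) * (a * exp (a * t)))); [| |intros s Hs|exact Ht].
    - unfold h. apply right_cont0_mult; [apply right_cont0_minus|];
        auto using right_cont0_scal, right_cont0_exp_scal.
    - intros s Hs. eapply derivable_pt_lim_value.
      + apply derivable_pt_lim_mult; [apply derivable_pt_lim_minus|].
        * exact (Hd s Hs).
        * apply derivable_pt_lim_scal, derivable_pt_lim_exp_scal.
        * apply derivable_pt_lim_exp_scal.
      + cbv beta; ring.
    - specialize (Hb s Hs).
      assert (0 < exp (a * s)) by apply exp_pos. assert (0 < exp (- rho * s)) by apply exp_pos.
      assert (x' s + rho * Z * exp (- rho * s) + (x s - Z * exp (- rho * s)) * a <= 0) by nra.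
      nra. }
  assert (0 < exp (a * t)) by apply exp_pos.
  assert (x t - Z * exp (- rho * t) <= 0); [|lra].
  apply Rnot_lt_le; intro. unfold h in Hm, Hh0.
  assert (0 < (x t - Z * exp (- rho * t)) * exp (a * t)) by (apply Rmult_lt_0_compat; lra). lra.
Qed.

Lemma exp_decay_comparison_hom x x' a rho :
  right_cont0 x ->
  (forall t, 0 < t -> derivable_pt_lim x t (x' t)) ->
  (forall t, 0 < t -> x' t <= - a * x t) ->
  0 <= rho < a ->
  forall t, 0 <= t -> x t <= Rmax (x 0) 0 * exp (- rho * t).
Proof.
  intros Hc Hd Hb Hr t Ht.
  replace (Rmax (x 0) 0) with (Rmax (x 0) 0 + 0 / (a - rho)) by (unfold Rdiv; ring).
  apply (exp_decay_comparison x x'); auto; [|lra].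
  intros s Hs. rewrite Rmult_0_l, Rplus_0_r. auto.
Qed.

Definition holds_right_of (t : R) (P : R -> Prop) : Prop :=
  exists h, 0 < h /\ forall s, t < s < t + h -> P s.

Lemma holds_right_of_and t (P P' : R -> Prop) :
  holds_right_of t P -> holds_right_of t P' -> holds_right_of t (fun s => P s /\ P' s).
Proof.
  intros [h [Hh HP]] [h' [Hh' HP']]. exists (Rmin h h'). split; [now apply Rmin_pos|].
  intros s Hs. assert (Rmin h h' <= h) by apply Rmin_l. assert (Rmin h h' <= h') by apply Rmin_r.
  split; [apply HP|apply HP']; lra.
Qed.

Lemma holds_right_of_forall_k n t (P : nat -> R -> Prop) :
  (forall k, (1 <= k <= n)%nat -> holds_right_of t (P k)) ->
  holds_right_of t (fun s => forall k, (1 <= k <= n)%nat -> P k s).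
Proof.
  induction n as [|n IH]; intros H.
  - exists 1. split; [lra|]. intros; lia.
  - destruct (holds_right_of_and t (fun s => forall k, (1 <= k <= n)%nat -> P k s) (P (S n)))
      as [h [Hh HP]].
    + apply IH. intros; apply H; lia.
    + apply H; lia.
    + exists h. split; [exact Hh|]. intros s Hs k Hk.
      destruct (HP s Hs) as [Hlow Hlast].
      destruct (Nat.eq_dec k (S n)) as [->|]; [exact Hlast|]. apply Hlow; lia.
Qed.

Lemma holds_right_of_pos_0 f : right_cont0 f -> 0 < f 0 -> holds_right_of 0 (fun s => 0 < f s).
Proof.
  intros Hc Hf. destruct (Hc (f 0) Hf) as [h [Hh H]]. exists h. split; [exact Hh|].
  intros s Hs. specialize (H s ltac:(lra)). apply Rabs_def2 in H. lra.
Qed.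

Lemma holds_right_of_pos f t : continuity_pt f t -> 0 < f t -> holds_right_of t (fun s => 0 < f s).
Proof.
  intros Hc Hf. destruct (Hc (f t) Hf) as [h [Hh H]]. exists h. split; [exact Hh|].
  intros s Hs. assert (Hd : Rabs (f s - f t) < f t).
  { apply H. split; [split; [exact I|lra]|]. simpl; unfold R_dist; rewrite Rabs_right; lra. }
  apply Rabs_def2 in Hd. lra.
Qed.

(* Argue at the supremum of the initial intervals on which [P] holds. *)
Lemma real_induction (P : R -> Prop) T :
  P 0 ->
  (forall t, 0 <= t < T -> P t -> holds_right_of t P) ->
  (forall t, 0 < t <= T -> (forall s, 0 <= s < t -> P s) -> P t) ->
  forall t, 0 <= t <= T -> P t.
Proof.
  intros H0 Hright Hclosed t Ht.
  set (E := fun u => 0 <= u <= T /\ forall s, 0 <= s <= u -> P s).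
  assert (E0 : E 0) by (split; [lra|]; intros s Hs; replace s with 0 by lra; exact H0).
  destruct (completeness E) as [tau [Hub Hlub]].
  { exists T. intros u [Hu _]. lra. }
  { now exists 0. }
  assert (HtT : tau <= T) by (apply Hlub; intros u [Hu _]; lra).
  assert (Ht0 : 0 <= tau) by (apply Hub; exact E0).
  assert (Hbefore : forall s, 0 <= s < tau -> P s).
  { intros s Hs. destruct (classic (exists u, E u /\ s < u)) as [[u [[_ Hu] Hsu]]|Hno].
    - apply Hu; lra.
    - exfalso. assert (tau <= s); [|lra].
      apply Hlub. intros u Eu. apply Rnot_lt_le. intro. apply Hno. now exists u. }
  assert (Htau : P tau).
  { destruct (Req_dec tau 0) as [->|]; [exact H0|]. apply Hclosed; [lra|exact Hbefore]. }
  assert (HT : tau = T).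
  { destruct (Req_dec tau T) as [|Hne]; [assumption|exfalso].
    destruct (Hright tau ltac:(lra) Htau) as [h [Hh HP]].
    set (u := Rmin (tau + h / 2) T).
    assert (tau < u) by (apply Rmin_glb_lt; lra).
    assert (u <= tau + h / 2) by apply Rmin_l. assert (u <= T) by apply Rmin_r.
    assert (E u); [|assert (u <= tau) by (apply Hub; auto); lra].
    split; [lra|]. intros s Hs.
    destruct (Rtotal_order s tau) as [|[->|]]; [apply Hbefore; lra|exact Htau|apply HP; lra]. }
  destruct (Rlt_or_le t tau); [apply Hbefore; lra|]. replace t with tau by lra. exact Htau.
Qed.

Lemma nonneg_at_first_exit f t :
  0 < t -> continuity_pt f t -> (forall s, 0 <= s < t -> 0 < f s) -> 0 <= f t.
Proof.
  intros Ht Hc Hpos. apply Rnot_lt_le; intro Hneg.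
  destruct (Hc (- f t)) as [h [Hh H]]; [lra|].
  set (s := Rmax 0 (t - h / 2)).
  assert (0 <= s) by apply Rmax_l. assert (t - h / 2 <= s) by apply Rmax_r.
  assert (s < t) by (apply Rmax_lub_lt; lra).
  assert (Hd : Rabs (f s - f t) < - f t).
  { apply H. split; [split; [exact I|lra]|]. simpl; unfold R_dist; rewrite Rabs_left; lra. }
  apply Rabs_def2 in Hd. specialize (Hpos s ltac:(lra)). lra.
Qed.

Lemma derivative_nonpos_at_first_zero f t l :
  0 < t -> derivable_pt_lim f t l -> f t <= 0 -> (forall s, 0 <= s < t -> 0 < f s) -> l <= 0.
Proof.
  intros Ht Hd Hf Hpos. apply Rnot_lt_le; intro Hl.
  destruct (Hd (l / 2) ltac:(lra)) as [[del Hdel] Hlim]; simpl in Hlim.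
  set (h := - Rmin (del / 2) (t / 2)).
  assert (0 < Rmin (del / 2) (t / 2)) by (apply Rmin_pos; lra).
  assert (Rmin (del / 2) (t / 2) <= del / 2) by apply Rmin_l.
  assert (Rmin (del / 2) (t / 2) <= t / 2) by apply Rmin_r.
  assert (Habs : Rabs h < del) by (unfold h; rewrite Rabs_Ropp, Rabs_right; lra).
  specialize (Hlim h ltac:(unfold h; lra) Habs). apply Rabs_def2 in Hlim.
  assert (0 < f (t + h)) by (apply Hpos; unfold h; lra).
  assert ((f (t + h) - f t) / h < 0); [|lra].
  assert (/ h < 0) by (apply Rinv_lt_0_compat; unfold h; lra). unfold Rdiv. nra.
Qed.

Lemma nonneg_of_vanishing_lower_bounds x c K :
  0 < c -> 0 <= K -> (forall eps, 0 < eps <= c -> - (eps * K) < x) -> 0 <= x.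
Proof.
  intros Hc HK H. apply Rnot_lt_le; intro Hx.
  set (eps := Rmin c (- x / (K + 1))).
  assert (0 < - x / (K + 1)) by (apply Rdiv_lt_0_compat; lra).
  assert (0 < eps) by (apply Rmin_pos; lra).
  assert (eps <= c) by apply Rmin_l. assert (Heps : eps <= - x / (K + 1)) by apply Rmin_r.
  specialize (H eps ltac:(lra)).
  assert (eps * (K + 1) <= - x) by
    (apply (Rmult_le_compat_r (K + 1)) in Heps; [|lra]; unfold Rdiv in Heps;
     rewrite Rmult_assoc, Rinv_l, Rmult_1_r in Heps; lra).
  nra.
Qed.

Lemma pos_at_first_exit f t l :
  0 < t -> derivable_pt_lim f t l -> (f t = 0 -> 0 < l) ->
  (forall s, 0 <= s < t -> 0 < f s) -> 0 < f t.
Proof.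
  intros Ht Hd Hl Hpos.
  pose proof (nonneg_at_first_exit f t Ht (derivable_pt_lim_continuity_pt _ _ _ Hd) Hpos) as H0.
  destruct (Rle_lt_or_eq_dec _ _ H0) as [|Hz]; [assumption|exfalso].
  pose proof (Hl (eq_sym Hz)).
  pose proof (derivative_nonpos_at_first_zero f t l Ht Hd ltac:(lra) Hpos). lra.
Qed.

Section SVIQS.

Variables (n : nat) (p lam phi mu : nat -> R) (b d Phi beta gamma eta omega delta : R).

Hypothesis Hn : (1 <= n)%nat.
Hypothesis Hp : forall k, (1 <= k <= n)%nat -> 0 < p k.
Hypothesis Hd : 0 < d.
Hypothesis Hdb : d < b.
Hypothesis HPhi : 0 < Phi.
Hypothesis Hpar : forall k, (1 <= k <= n)%nat -> 0 < lam k /\ 0 < phi k /\ 0 < mu k.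
Hypothesis Hbeta : 0 < beta.
Hypothesis Hgamma : 0 < gamma.
Hypothesis Heta : 0 < eta.
Hypothesis Homega : 0 < omega.
Hypothesis Hdelta : 0 <= delta <= 1.

Lemma Nstar_bounds k : (1 <= k)%nat -> 0 < Nstar b d Phi k < 1.
Proof.
  intros Hk. unfold Nstar.
  assert (1 <= INR k) by (apply (le_INR 1); lia).
  assert (0 < b * INR k * Phi) by (apply Rmult_lt_0_compat; [apply Rmult_lt_0_compat|]; lra).
  split; [apply Rdiv_lt_0_compat; lra|].
  apply (Rmult_lt_reg_r (d + b * INR k * Phi)); [lra|]. unfold Rdiv.
  rewrite Rmult_assoc, Rinv_l by lra. lra.
Qed.

Lemma Lam_eq k : (1 <= k)%nat -> Lam b d Phi k = d * Nstar b d Phi k.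
Proof.
  intros Hk. unfold Lam, Nstar.
  assert (1 <= INR k) by (apply (le_INR 1); lia).
  assert (0 < b * INR k * Phi) by (apply Rmult_lt_0_compat; [apply Rmult_lt_0_compat|]; lra).
  field. lra.
Qed.

Lemma V0_bounds k : (1 <= k <= n)%nat ->
  0 <= V0 b d Phi omega mu k <= Nstar b d Phi k.
Proof.
  intros Hk. destruct (Nstar_bounds k ltac:(lia)). destruct (Hpar k Hk) as [_ [_ Hmu]].
  unfold V0. split; [apply Rdiv_nonneg; nra|].
  apply (Rmult_le_reg_r (mu k + omega + d)); [lra|].
  unfold Rdiv; rewrite Rmult_assoc, Rinv_l by lra. nra.
Qed.

Lemma S0_plus_V0 k : (1 <= k <= n)%nat ->
  S0 b d Phi omega mu k + V0 b d Phi omega mu k = Nstar b d Phi k.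
Proof. intros Hk. destruct (Hpar k Hk) as [_ [_ Hmu]]. unfold S0, V0. field. lra. Qed.

Lemma avgk_pos : 0 < avgk n p.
Proof.
  apply sumk_pos; [exact Hn|]. intros k Hk.
  apply Rmult_lt_0_compat; [apply lt_0_INR; lia|auto].
Qed.

Lemma weight_pos k : (1 <= k <= n)%nat -> 0 < phi k * p k.
Proof. intros Hk. apply Rmult_lt_0_compat; [apply Hpar|apply Hp]; auto. Qed.

Lemma lam_le_sumk k : (1 <= k <= n)%nat -> lam k <= sumk n lam.
Proof. apply sumk_term_le. intros; left; apply Hpar; auto. Qed.

Lemma mu_le_sumk k : (1 <= k <= n)%nat -> mu k <= sumk n mu.
Proof. apply sumk_term_le. intros; left; apply Hpar; auto. Qed.

Lemma sumk_lam_pos : 0 < sumk n lam.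
Proof. apply sumk_pos; [exact Hn|]. intros; apply Hpar; auto. Qed.

Lemma sumk_mu_pos : 0 < sumk n mu.
Proof. apply sumk_pos; [exact Hn|]. intros; apply Hpar; auto. Qed.

(* [Theta <= theta_gain * max_i I_i]. *)
Definition theta_gain : R := / avgk n p * sumk n (fun i => phi i * p i).

Lemma theta_gain_pos : 0 < theta_gain.
Proof.
  apply Rmult_lt_0_compat; [apply Rinv_0_lt_compat, avgk_pos|].
  apply sumk_pos; [exact Hn|exact weight_pos].
Qed.

Definition barrier_rate : R :=
  8 * sumk n lam * theta_gain + sumk n mu + gamma + eta + omega + beta + 1.

Lemma barrier_rate_pos : 0 < barrier_rate.
Proof.
  pose proof sumk_lam_pos. pose proof sumk_mu_pos. pose proof theta_gain_pos.
  unfold barrier_rate. nra.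
Qed.

Hypothesis HR0 : R0tilde n p lam phi b d Phi beta gamma < 1.

Definition decay_rate : R :=
  Rmin ((gamma + beta + d) * (1 - R0tilde n p lam phi b d Phi beta gamma)) d / 2.

(* The gains come from the comparison lemma: each forcing term [K e^{-r t}] enters
   with the factor [1 / (a - r) <= 2 / d]. *)
Definition I_gain : R := sumk n (fun i => phi i * p i) * sumk n (fun i => / (phi i * p i)).
Definition Q_gain : R := 1 + 2 * beta * I_gain / d.
Definition V_forcing : R := sumk n mu * (I_gain + Q_gain) + sumk n lam * theta_gain.
Definition V_gain : R := 1 + 2 * V_forcing / d.
Definition total_gain : R := V_gain + I_gain + Q_gain.

Lemma decay_rate_pos : 0 < decay_rate.
Proof.
  unfold decay_rate.
  set (a := (gamma + beta + d) * (1 - R0tilde n p lam phi b d Phi beta gamma)).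
  assert (0 < Rmin a d); [apply Rmin_pos; [apply Rmult_lt_0_compat|]|]; lra.
Qed.

Lemma decay_rate_le :
  2 * decay_rate <= (gamma + beta + d) * (1 - R0tilde n p lam phi b d Phi beta gamma) /\
  2 * decay_rate <= d.
Proof.
  unfold decay_rate.
  set (a := (gamma + beta + d) * (1 - R0tilde n p lam phi b d Phi beta gamma)).
  pose proof (Rmin_l a d). pose proof (Rmin_r a d). lra.
Qed.

Lemma I_gain_pos : 0 < I_gain.
Proof.
  apply Rmult_lt_0_compat; apply sumk_pos; [exact Hn|exact weight_pos|exact Hn|].
  intros i Hi. apply Rinv_0_lt_compat, weight_pos, Hi.
Qed.

Lemma Q_gain_ge_1 : 1 <= Q_gain.
Proof.
  pose proof I_gain_pos. unfold Q_gain.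
  assert (0 <= 2 * beta * I_gain / d); [apply Rdiv_nonneg; nra|lra].
Qed.

Lemma V_forcing_nonneg : 0 <= V_forcing.
Proof.
  pose proof I_gain_pos. pose proof Q_gain_ge_1. pose proof sumk_mu_pos. pose proof sumk_lam_pos.
  pose proof theta_gain_pos. unfold V_forcing. nra.
Qed.

Lemma V_gain_ge_1 : 1 <= V_gain.
Proof.
  pose proof V_forcing_nonneg. unfold V_gain.
  assert (0 <= 2 * V_forcing / d); [apply Rdiv_nonneg; lra|lra].
Qed.

Lemma total_gain_nonneg : 0 <= total_gain.
Proof.
  pose proof I_gain_pos. pose proof Q_gain_ge_1. pose proof V_gain_ge_1. unfold total_gain. lra.
Qed.

Lemma Rdiv_le_double K a : 0 <= K -> d / 2 <= a -> K / a <= 2 * K / d.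
Proof.
  intros. unfold Rdiv. replace (2 * K * / d) with (K * / (d / 2)) by (field; lra).
  apply Rmult_le_compat_l; [assumption|]. apply Rinv_le_contravar; lra.
Qed.

Lemma R0tilde_eq :
  R0tilde n p lam phi b d Phi beta gamma * (gamma + beta + d) =
  / avgk n p * sumk n (fun i => phi i * p i * lam i * Nstar b d Phi i).
Proof.
  unfold R0tilde. rewrite Rmult_assoc. f_equal.
  rewrite Rmult_comm, <- sumk_scal. apply sumk_ext. intros k Hk.
  rewrite Lam_eq by lia. field. lra.
Qed.

Section Solution.

Variables S V I Q : nat -> R -> R.

Hypothesis Hsol : is_solution n p lam phi mu b d Phi beta gamma eta omega delta S V I Q.
Hypothesis Hinit : admissible_init n b d Phi S V I Q.

Definition rhsS k t := Lam b d Phi k - lam k * S k t * Theta n p phi I t + gamma * I k t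
  + eta * Q k t + omega * V k t - (mu k + d) * S k t.
Definition rhsV k t :=
  mu k * S k t - delta * lam k * V k t * Theta n p phi I t - (d + omega) * V k t.
Definition rhsI k t := lam k * S k t * Theta n p phi I t + delta * lam k * V k t * Theta n p phi I t
  - (gamma + beta + d) * I k t.
Definition rhsQ k t := beta * I k t - (eta + d) * Q k t.

Lemma solution_derivatives k : (1 <= k <= n)%nat -> forall t, 0 < t ->
  derivable_pt_lim (S k) t (rhsS k t) /\ derivable_pt_lim (V k) t (rhsV k t) /\
  derivable_pt_lim (I k) t (rhsI k t) /\ derivable_pt_lim (Q k) t (rhsQ k t).
Proof. intros Hk. apply (Hsol k Hk). Qed.

Lemma solution_right_cont0 k : (1 <= k <= n)%nat ->
  right_cont0 (S k) /\ right_cont0 (V k) /\ right_cont0 (I k) /\ right_cont0 (Q k).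
Proof. intros Hk. destruct (Hsol k Hk) as [? [? [? [? _]]]]. auto. Qed.

Lemma total_population k : (1 <= k <= n)%nat -> forall t, 0 <= t ->
  S k t + V k t + I k t + Q k t = Nstar b d Phi k.
Proof.
  intros Hk.
  destruct (solution_right_cont0 k Hk) as [cS [cV [cI cQ]]].
  set (g := fun t => S k t + V k t + I k t + Q k t - Nstar b d Phi k).
  assert (Hg0 : g 0 = 0) by (unfold g; destruct (Hinit k Hk) as [_ [_ [_ [_ ->]]]]; ring).
  assert (Hc : right_cont0 g).
  { apply right_cont0_minus; [|apply right_cont0_const].
    repeat apply right_cont0_plus; auto. }
  (* [g' = -d g] since the total birth rate is [Lam_k = d N_k^*]. *)
  assert (Hdg : forall t, 0 < t -> derivable_pt_lim g t (- d * g t)).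
  { intros t Ht. destruct (solution_derivatives k Hk t Ht) as [dS [dV [dI dQ]]].
    eapply derivable_pt_lim_value.
    - apply derivable_pt_lim_minus; [|apply derivable_pt_lim_const].
      repeat apply derivable_pt_lim_plus; eassumption.
    - unfold g, rhsS, rhsV, rhsI, rhsQ. rewrite Lam_eq by lia. ring. }
  intros t Ht.
  assert (Hup : g t <= 0).
  { pose proof (exp_decay_comparison_hom g _ d 0 Hc Hdg ltac:(intros; lra) ltac:(lra) t Ht) as Hcmp.
    rewrite Hg0, Rmax_left in Hcmp by lra. lra. }
  assert (Hlow : - g t <= 0).
  { assert (Hdg' : forall s, 0 < s -> derivable_pt_lim (fun t => - g t) s (- d * - g s)).
    { intros s Hs. eapply derivable_pt_lim_value; [apply derivable_pt_lim_opp, Hdg, Hs|ring]. }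
    pose proof (exp_decay_comparison_hom _ _ d 0 (right_cont0_opp g Hc) Hdg'
      ltac:(intros; lra) ltac:(lra) t Ht) as Hcmp.
    cbv beta in Hcmp. rewrite Hg0, Ropp_0, Rmax_left in Hcmp by lra. lra. }
  unfold g in Hup, Hlow. lra.
Qed.

(** * Invariance of the nonnegative orthant *)

Lemma Theta_bounds e t :
  (forall i, (1 <= i <= n)%nat -> - e <= I i t <= 4) ->
  - e * theta_gain <= Theta n p phi I t <= 4 * theta_gain.
Proof.
  intros HI. unfold Theta, theta_gain.
  pose proof avgk_pos as HA. assert (0 < / avgk n p) by (apply Rinv_0_lt_compat; auto).
  assert (H1 : sumk n (fun i => - e * (phi i * p i)) <= sumk n (fun i => phi i * p i * I i t)).
  { apply sumk_le. intros i Hi. pose proof (weight_pos i Hi). destruct (HI i Hi). nra. }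
  assert (H2 : sumk n (fun i => phi i * p i * I i t) <= sumk n (fun i => 4 * (phi i * p i))).
  { apply sumk_le. intros i Hi. pose proof (weight_pos i Hi). destruct (HI i Hi). nra. }
  rewrite sumk_scal in H1, H2. split; nra.
Qed.

Lemma barrier_box e t : 0 <= t -> e <= 1 ->
  (forall i, (1 <= i <= n)%nat -> - e <= S i t /\ - e <= V i t /\ - e <= I i t /\ - e <= Q i t) ->
  forall i, (1 <= i <= n)%nat ->
    - e <= S i t <= 4 /\ - e <= V i t <= 4 /\ - e <= I i t <= 4 /\ - e <= Q i t <= 4.
Proof.
  intros Ht He Hlow i Hi. pose proof (total_population i Hi t Ht).
  destruct (Nstar_bounds i ltac:(lia)). destruct (Hlow i Hi) as [? [? [? ?]]].
  repeat split; lra.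
Qed.

(* Once all compartments lie in [[-e, 4]], the vector field pushes any compartment
   sitting at [-e] upward faster than the barrier [-e] decreases (rate [barrier_rate]). *)
Lemma inward_at_barrier e t : 0 < t -> 0 < e <= 1 ->
  (forall i, (1 <= i <= n)%nat -> - e <= S i t /\ - e <= V i t /\ - e <= I i t /\ - e <= Q i t) ->
  forall k, (1 <= k <= n)%nat ->
    (S k t = - e -> - (barrier_rate * e) < rhsS k t) /\
    (V k t = - e -> - (barrier_rate * e) < rhsV k t) /\
    (I k t = - e -> - (barrier_rate * e) < rhsI k t) /\
    (Q k t = - e -> - (barrier_rate * e) < rhsQ k t).
Proof.
  intros Ht He Hlow k Hk.
  pose proof (barrier_box e t ltac:(lra) ltac:(lra) Hlow) as Hbox.
  pose proof theta_gain_pos as HC.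
  destruct (Theta_bounds e t) as [Th1 Th2]; [intros i Hi; apply Hbox; auto|].
  set (C := theta_gain) in *. set (Th := Theta n p phi I t) in *.
  destruct (Hbox k Hk) as [[lS uS] [[lV uV] [[lI uI] [lQ uQ]]]].
  destruct (Hpar k Hk) as [Hl [_ Hmu]].
  pose proof (lam_le_sumk k Hk). pose proof (mu_le_sumk k Hk).
  set (Ls := sumk n lam) in *. set (Ms := sumk n mu) in *.
  assert (HLam : 0 < Lam b d Phi k).
  { rewrite Lam_eq by lia. destruct (Nstar_bounds k ltac:(lia)). nra. }
  assert (Hrate : barrier_rate * e = (8 * Ls * C + Ms + gamma + eta + omega + beta + 1) * e)
    by reflexivity.
  assert (HeTh : - (Ls * (e * C)) <= lam k * (e * Th)).
  { apply mul_ge_neg_bound; [lra|nra|]. assert (- C <= Th) by nra. nra. }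
  assert (Hprod : forall x, - e <= x <= 4 -> - (Ls * (4 * e * C)) <= lam k * (x * Th)).
  { intros x Hx. apply mul_ge_neg_bound; [lra|nra|]. apply mul_ge_box_bound; lra. }
  pose proof (mul_ge_neg_bound (mu k) Ms (S k t) e ltac:(lra) ltac:(lra) lS).
  pose proof (mul_ge_neg_bound gamma gamma (I k t) e ltac:(lra) ltac:(lra) lI).
  pose proof (mul_ge_neg_bound beta beta (I k t) e ltac:(lra) ltac:(lra) lI).
  pose proof (mul_ge_neg_bound eta eta (Q k t) e ltac:(lra) ltac:(lra) lQ).
  pose proof (mul_ge_neg_bound omega omega (V k t) e ltac:(lra) ltac:(lra) lV).
  assert (0 <= Ls * (e * C)) by (apply Rmult_le_pos; nra).
  assert (0 <= Ms * e) by (apply Rmult_le_pos; nra).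
  unfold rhsS, rhsV, rhsI, rhsQ; fold Th.
  repeat split; intros Hat; rewrite Hat.
  - nra.
  - pose proof (mul_ge_neg_bound delta 1 _ (Ls * (e * C)) Hdelta ltac:(lra) HeTh). nra.
  - pose proof (Hprod _ (conj lS uS)). pose proof (Hprod _ (conj lV uV)).
    pose proof (mul_ge_neg_bound delta 1 (lam k * (V k t * Th)) (Ls * (4 * e * C)) Hdelta
      ltac:(nra) ltac:(eassumption)).
    nra.
  - nra.
Qed.

Definition above_barrier (eps t : R) : Prop :=
  forall k, (1 <= k <= n)%nat ->
    0 < S k t + eps * exp (barrier_rate * t) /\ 0 < V k t + eps * exp (barrier_rate * t) /\
    0 < I k t + eps * exp (barrier_rate * t) /\ 0 < Q k t + eps * exp (barrier_rate * t).

(* [eps <= e^{-L T}] keeps the barrier depth [eps e^{L t}] below [1] on [[0, T]]. *)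
Lemma above_barrier_closed eps T t :
  0 < eps <= exp (- barrier_rate * T) -> 0 < t <= T ->
  (forall s, 0 <= s < t -> above_barrier eps s) -> above_barrier eps t.
Proof.
  intros Heps Ht Hbefore.
  pose proof barrier_rate_pos as HL. set (L := barrier_rate) in *.
  set (e := eps * exp (L * t)).
  assert (He : 0 < e <= 1).
  { split; [apply Rmult_lt_0_compat; [lra|apply exp_pos]|].
    assert (Hle : e <= exp (- L * T) * exp (L * t))
      by (apply Rmult_le_compat_r; [left; apply exp_pos|lra]).
    rewrite <- exp_plus in Hle. pose proof (exp_scal_le_1 (t - T) L ltac:(lra) ltac:(lra)).
    replace (- L * T + L * t) with ((t - T) * L) in Hle by ring. lra. }
  assert (Hshift : forall (X : nat -> R -> R) k l, derivable_pt_lim (X k) t l ->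
    derivable_pt_lim (fun s => X k s + eps * exp (L * s)) t (l + L * e)).
  { intros X k l Hder. eapply derivable_pt_lim_value.
    - apply derivable_pt_lim_plus; [exact Hder|].
      apply derivable_pt_lim_scal, derivable_pt_lim_exp_scal.
    - unfold e; ring. }
  assert (Hlow : forall (X : nat -> R -> R) k l, derivable_pt_lim (X k) t l ->
    (forall s, 0 <= s < t -> 0 < X k s + eps * exp (L * s)) -> - e <= X k t).
  { intros X k l Hder Hpos.
    pose proof (nonneg_at_first_exit _ t ltac:(lra)
      (derivable_pt_lim_continuity_pt _ _ _ (Hshift X k l Hder)) Hpos).
    unfold e; lra. }
  assert (Hstrict : forall (X : nat -> R -> R) k l, derivable_pt_lim (X k) t l ->
    (X k t = - e -> - (L * e) < l) ->
    (forall s, 0 <= s < t -> 0 < X k s + eps * exp (L * s)) -> 0 < X k t + eps * exp (L * t)).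
  { intros X k l Hder Hin Hpos. apply (pos_at_first_exit _ t _ ltac:(lra) (Hshift X k l Hder));
      [|exact Hpos].
    intros Hz. cbv beta in Hz. assert (- (L * e) < l) by (apply Hin; unfold e; lra). lra. }
  assert (Hbox : forall i, (1 <= i <= n)%nat ->
    - e <= S i t /\ - e <= V i t /\ - e <= I i t /\ - e <= Q i t).
  { intros i Hi. destruct (solution_derivatives i Hi t ltac:(lra)) as [dS [dV [dI dQ]]].
    repeat split; (eapply Hlow; [eassumption|]); intros s Hs; apply (Hbefore s Hs i Hi). }
  intros k Hk. destruct (solution_derivatives k Hk t ltac:(lra)) as [dS [dV [dI dQ]]].
  destruct (inward_at_barrier e t ltac:(lra) He Hbox k Hk) as [iS [iV [iI iQ]]].
  repeat split; (eapply Hstrict; [eassumption|eassumption|]);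
    intros s Hs; apply (Hbefore s Hs k Hk).
Qed.

Lemma above_barrier_open eps t :
  0 <= t -> above_barrier eps t -> holds_right_of t (above_barrier eps).
Proof.
  intros Ht Hab.
  assert (Hcomp : forall (X : nat -> R -> R) k,
    right_cont0 (X k) -> (forall s, 0 < s -> exists l, derivable_pt_lim (X k) s l) ->
    0 < X k t + eps * exp (barrier_rate * t) ->
    holds_right_of t (fun s => 0 < X k s + eps * exp (barrier_rate * s))).
  { intros X k Hc Hder Hpos. destruct (Req_dec t 0) as [->|Hne].
    - apply holds_right_of_pos_0; [|exact Hpos].
      apply right_cont0_plus; [exact Hc|apply right_cont0_scal, right_cont0_exp_scal].
    - apply holds_right_of_pos; [|exact Hpos].
      destruct (Hder t ltac:(lra)) as [l Hl].
      apply (derivable_pt_lim_continuity_pt _ _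
        (l + eps * (barrier_rate * exp (barrier_rate * t)))).
      apply derivable_pt_lim_plus; [exact Hl|].
      apply derivable_pt_lim_scal, derivable_pt_lim_exp_scal. }
  apply holds_right_of_forall_k. intros k Hk.
  destruct (solution_right_cont0 k Hk) as [cS [cV [cI cQ]]].
  destruct (Hab k Hk) as [pS [pV [pI pQ]]].
  repeat apply holds_right_of_and; apply Hcomp; auto; intros s Hs;
    destruct (solution_derivatives k Hk s Hs) as [dS [dV [dI dQ]]]; eexists; eassumption.
Qed.

Lemma above_barrier_on eps T :
  0 < eps <= exp (- barrier_rate * T) -> forall t, 0 <= t <= T -> above_barrier eps t.
Proof.
  intros Heps. apply real_induction.
  - intros k Hk. destruct (Hinit k Hk) as [? [? [? [? _]]]].
    rewrite Rmult_0_r, exp_0, Rmult_1_r. lra.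
  - intros t Ht. apply above_barrier_open. lra.
  - intros t Ht. apply (above_barrier_closed eps T t Heps Ht).
Qed.

Lemma solution_nonneg k : (1 <= k <= n)%nat -> forall t, 0 <= t ->
  0 <= S k t /\ 0 <= V k t /\ 0 <= I k t /\ 0 <= Q k t.
Proof.
  intros Hk t Ht.
  assert (Hbar : forall eps, 0 < eps <= exp (- barrier_rate * (t + 1)) -> above_barrier eps t)
    by (intros eps Heps; apply (above_barrier_on eps (t + 1) Heps); lra).
  assert (Hc := exp_pos (- barrier_rate * (t + 1))).
  assert (HK : 0 <= exp (barrier_rate * t)) by (left; apply exp_pos).
  repeat split; apply (nonneg_of_vanishing_lower_bounds _ _ _ Hc HK);
    intros eps Heps; destruct (Hbar eps Heps k Hk) as [? [? [? ?]]]; lra.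
Qed.

(** * Exponential decay towards the disease-free equilibrium *)

Lemma weighted_infected_nonneg t : 0 <= t -> 0 <= sumk n (fun i => phi i * p i * I i t).
Proof.
  intros Ht. apply sumk_nonneg. intros i Hi. pose proof (weight_pos i Hi).
  destruct (solution_nonneg i Hi t Ht) as [_ [_ [? _]]]. nra.
Qed.

(* [S_i + delta V_i <= N_i^*] bounds the weighted incidence by [R0tilde (gamma + beta + d) W]. *)
Lemma weighted_incidence_bound t : 0 < t ->
  sumk n (fun i => phi i * p i * rhsI i t)
  <= - ((gamma + beta + d) * (1 - R0tilde n p lam phi b d Phi beta gamma))
     * sumk n (fun i => phi i * p i * I i t).
Proof.
  intros Ht. set (c := gamma + beta + d).
  assert (HTh0 : 0 <= Theta n p phi I t).
  { apply Rmult_le_pos; [left; apply Rinv_0_lt_compat, avgk_pos|].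
    apply weighted_infected_nonneg; lra. }
  eapply Rle_trans.
  { apply (sumk_le n _ (fun i => Theta n p phi I t * (phi i * p i * lam i * Nstar b d Phi i)
                                 + (- c) * (phi i * p i * I i t))).
    intros i Hi. pose proof (weight_pos i Hi). destruct (Hpar i Hi) as [Hl _].
    destruct (solution_nonneg i Hi t ltac:(lra)) as [? [? [? ?]]].
    pose proof (total_population i Hi t ltac:(lra)).
    assert (lam i * (S i t + delta * V i t) <= lam i * Nstar b d Phi i)
      by (apply Rmult_le_compat_l; nra).
    assert (phi i * p i * (lam i * (S i t + delta * V i t)) * Theta n p phi I t
            <= phi i * p i * (lam i * Nstar b d Phi i) * Theta n p phi I t)
      by (apply Rmult_le_compat_r; [lra|apply Rmult_le_compat_l; lra]).
    unfold rhsI, c. nra. }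
  rewrite sumk_plus, !sumk_scal.
  replace (Theta n p phi I t * sumk n (fun i => phi i * p i * lam i * Nstar b d Phi i))
    with (R0tilde n p lam phi b d Phi beta gamma * c * sumk n (fun i => phi i * p i * I i t))
    by (unfold Theta, c; rewrite R0tilde_eq; ring).
  apply Req_le. ring.
Qed.

Lemma initial_distance_le_1 j : (1 <= j <= n)%nat ->
  I j 0 <= 1 /\ Q j 0 <= 1 /\ Rabs (V j 0 - V0 b d Phi omega mu j) <= 1.
Proof.
  intros Hj. destruct (Hinit j Hj) as [? [? [? [? Htot]]]].
  destruct (Nstar_bounds j ltac:(lia)). destruct (V0_bounds j Hj).
  repeat split; try lra. apply Rabs_le. lra.
Qed.

Section Decay.

Variable D : R.

Hypothesis HD0 : forall j, (1 <= j <= n)%nat ->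
  I j 0 <= D /\ Q j 0 <= D /\ Rabs (V j 0 - V0 b d Phi omega mu j) <= D.

Lemma D_nonneg : 0 <= D.
Proof.
  destruct (HD0 1 ltac:(lia)) as [_ [_ H]].
  pose proof (Rabs_pos (V 1%nat 0 - V0 b d Phi omega mu 1)). lra.
Qed.

Lemma weighted_infected_decay t : 0 <= t ->
  sumk n (fun i => phi i * p i * I i t)
  <= D * sumk n (fun i => phi i * p i) * exp (- decay_rate * t).
Proof.
  intros Ht. destruct decay_rate_le as [Hra _]. pose proof decay_rate_pos.
  set (W := fun s => sumk n (fun i => phi i * p i * I i s)).
  assert (HW : W t <= Rmax (W 0) 0 * exp (- decay_rate * t)).
  { apply (exp_decay_comparison_hom W (fun s => sumk n (fun i => phi i * p i * rhsI i s))
      ((gamma + beta + d) * (1 - R0tilde n p lam phi b d Phi beta gamma)));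
      [| |exact weighted_incidence_bound|lra|exact Ht].
    - apply right_cont0_sumk. intros i Hi. apply right_cont0_scal, (solution_right_cont0 i Hi).
    - intros s Hs. apply (derivable_pt_lim_sumk n (fun i s => phi i * p i * I i s)).
      intros i Hi. apply derivable_pt_lim_scal, (solution_derivatives i Hi s Hs). }
  rewrite Rmax_left in HW by (apply weighted_infected_nonneg; lra).
  apply (Rle_trans _ _ _ HW), Rmult_le_compat_r; [left; apply exp_pos|].
  unfold W. rewrite <- sumk_scal. apply sumk_le. intros i Hi.
  pose proof (weight_pos i Hi). destruct (HD0 i Hi) as [? _]. nra.
Qed.

Lemma Theta_decay t : 0 <= t ->
  0 <= Theta n p phi I t <= D * theta_gain * exp (- decay_rate * t).
Proof.
  intros Ht. pose proof (weighted_infected_decay t Ht).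
  assert (0 < / avgk n p) by apply Rinv_0_lt_compat, avgk_pos.
  pose proof (weighted_infected_nonneg t Ht).
  unfold Theta, theta_gain. split; [nra|].
  replace (D * (/ avgk n p * sumk n (fun i => phi i * p i)) * exp (- decay_rate * t))
    with (/ avgk n p * (D * sumk n (fun i => phi i * p i) * exp (- decay_rate * t))) by ring.
  apply Rmult_le_compat_l; lra.
Qed.

Lemma infected_decay k t : (1 <= k <= n)%nat -> 0 <= t ->
  I k t <= D * I_gain * exp (- decay_rate * t).
Proof.
  intros Hk Ht. pose proof (weight_pos k Hk) as Hw.
  pose proof (weighted_infected_decay t Ht) as HW. pose proof (weighted_infected_nonneg t Ht).
  set (W := sumk n (fun i => phi i * p i * I i t)) in *.
  assert (H1 : phi k * p k * I k t <= W).
  { apply (sumk_term_le n (fun i => phi i * p i * I i t)); [|exact Hk].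
    intros i Hi. pose proof (weight_pos i Hi).
    destruct (solution_nonneg i Hi t Ht) as [_ [_ [? _]]]. nra. }
  assert (H2 : / (phi k * p k) <= sumk n (fun i => / (phi i * p i))).
  { apply (sumk_term_le n (fun i => / (phi i * p i))); [|exact Hk].
    intros i Hi. left; apply Rinv_0_lt_compat, weight_pos, Hi. }
  assert (H3 : I k t <= W * / (phi k * p k)).
  { apply (Rmult_le_reg_l (phi k * p k)); [exact Hw|].
    rewrite (Rmult_comm W), <- Rmult_assoc, Rinv_r by lra. lra. }
  assert (0 < / (phi k * p k)) by (apply Rinv_0_lt_compat; lra).
  pose proof (exp_pos (- decay_rate * t)). pose proof D_nonneg.
  unfold I_gain. nra.
Qed.

Lemma quarantined_decay k t : (1 <= k <= n)%nat -> 0 <= t ->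
  Q k t <= D * Q_gain * exp (- decay_rate * t).
Proof.
  intros Hk Ht. destruct decay_rate_le as [_ Hrd]. pose proof decay_rate_pos.
  pose proof D_nonneg. pose proof I_gain_pos.
  assert (HK : 0 <= beta * D * I_gain) by (apply Rmult_le_pos; nra).
  eapply Rle_trans.
  { apply (exp_decay_comparison (Q k) (rhsQ k) (eta + d) (beta * D * I_gain) decay_rate);
      [apply (solution_right_cont0 k Hk)|apply (solution_derivatives k Hk)| |lra|exact HK|exact Ht].
    intros s Hs. pose proof (infected_decay k s Hk ltac:(lra)). unfold rhsQ. nra. }
  apply Rmult_le_compat_r; [left; apply exp_pos|].
  destruct (HD0 k Hk) as [_ [HQ0 _]]. destruct (solution_nonneg k Hk 0 ltac:(lra)) as [_ [_ [_ ?]]].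
  rewrite Rmax_left by lra.
  pose proof (Rdiv_le_double (beta * D * I_gain) (eta + d - decay_rate) HK ltac:(lra)).
  unfold Q_gain. replace (D * (1 + 2 * beta * I_gain / d)) with (D + 2 * (beta * D * I_gain) / d)
    by (field; lra). lra.
Qed.

Lemma vaccinated_upper k t : (1 <= k <= n)%nat -> 0 <= t ->
  V k t - V0 b d Phi omega mu k <= D * exp (- decay_rate * t).
Proof.
  intros Hk Ht. destruct decay_rate_le as [_ Hrd]. pose proof decay_rate_pos.
  destruct (Hpar k Hk) as [Hl [_ Hmu]].
  assert (HV0 : mu k * Nstar b d Phi k = (mu k + omega + d) * V0 b d Phi omega mu k)
    by (unfold V0; field; lra).
  eapply Rle_trans.
  { apply (exp_decay_comparison_hom (fun s => V k s - V0 b d Phi omega mu k) (rhsV k)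
      (mu k + omega + d) decay_rate); [| |intros s Hs|lra|exact Ht].
    - apply right_cont0_minus; [apply (solution_right_cont0 k Hk)|apply right_cont0_const].
    - intros s Hs. eapply derivable_pt_lim_value.
      + apply derivable_pt_lim_minus;
          [apply (solution_derivatives k Hk s Hs)|apply derivable_pt_lim_const].
      + ring.
    - destruct (solution_nonneg k Hk s ltac:(lra)) as [? [? [? ?]]].
      pose proof (total_population k Hk s ltac:(lra)).
      destruct (Theta_decay s ltac:(lra)) as [HTh _].
      assert (0 <= delta * lam k * V k s * Theta n p phi I s)
        by (apply Rmult_le_pos; [repeat apply Rmult_le_pos; lra|exact HTh]).
      assert (0 <= mu k * (I k s + Q k s)) by (apply Rmult_le_pos; lra).
      cbv beta. unfold rhsV. nra. }
  apply Rmult_le_compat_r; [left; apply exp_pos|].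
  destruct (HD0 k Hk) as [_ [_ Hv0]]. apply Rabs_le_bounds in Hv0.
  cbv beta. pose proof D_nonneg. apply Rmax_lub; lra.
Qed.

(* [-(V_k - V_k^0)] is driven by infections of vaccinated individuals and by the
   vaccination deficit [mu_k (I_k + Q_k)]. *)
Lemma vaccinated_deficit_rate k t : (1 <= k <= n)%nat -> 0 < t ->
  - rhsV k t <= - (mu k + omega + d) * - (V k t - V0 b d Phi omega mu k)
                + D * V_forcing * exp (- decay_rate * t).
Proof.
  intros Hk Ht. destruct (Hpar k Hk) as [Hl [_ Hmu]].
  pose proof D_nonneg. pose proof I_gain_pos. pose proof Q_gain_ge_1. pose proof theta_gain_pos.
  assert (HV0 : mu k * Nstar b d Phi k = (mu k + omega + d) * V0 b d Phi omega mu k)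
    by (unfold V0; field; lra).
  destruct (solution_nonneg k Hk t ltac:(lra)) as [? [? [? ?]]].
  pose proof (total_population k Hk t ltac:(lra)). destruct (Nstar_bounds k ltac:(lia)).
  destruct (Theta_decay t ltac:(lra)) as [HTh0 HTh].
  pose proof (infected_decay k t Hk ltac:(lra)). pose proof (quarantined_decay k t Hk ltac:(lra)).
  pose proof (lam_le_sumk k Hk). pose proof (mu_le_sumk k Hk).
  set (E := exp (- decay_rate * t)) in *. assert (0 < E) by apply exp_pos.
  assert (Hinc : delta * lam k * V k t * Theta n p phi I t <= sumk n lam * (D * theta_gain * E)).
  { assert (0 <= delta * V k t <= 1) by (split; [apply Rmult_le_pos|]; nra).
    assert (0 <= lam k * (delta * V k t) <= sumk n lam) by (split; nra).
    replace (delta * lam k * V k t * Theta n p phi I t)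
      with (lam k * (delta * V k t) * Theta n p phi I t) by ring.
    apply Rmult_le_compat; lra. }
  assert (Hout : mu k * (I k t + Q k t) <= sumk n mu * (D * I_gain * E + D * Q_gain * E))
    by (apply Rmult_le_compat; lra).
  unfold rhsV, V_forcing. nra.
Qed.

Lemma vaccinated_lower k t : (1 <= k <= n)%nat -> 0 <= t ->
  - (V k t - V0 b d Phi omega mu k) <= D * V_gain * exp (- decay_rate * t).
Proof.
  intros Hk Ht. destruct decay_rate_le as [_ Hrd]. pose proof decay_rate_pos.
  destruct (Hpar k Hk) as [_ [_ Hmu]].
  assert (HK : 0 <= D * V_forcing) by (apply Rmult_le_pos; [apply D_nonneg|apply V_forcing_nonneg]).
  eapply Rle_trans.
  { apply (exp_decay_comparison (fun s => - (V k s - V0 b d Phi omega mu k)) (fun s => - rhsV k s)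
      (mu k + omega + d) (D * V_forcing) decay_rate); [| |intros s Hs|lra|exact HK|exact Ht].
    - apply right_cont0_opp, right_cont0_minus;
        [apply (solution_right_cont0 k Hk)|apply right_cont0_const].
    - intros s Hs. eapply derivable_pt_lim_value.
      + apply derivable_pt_lim_opp, derivable_pt_lim_minus;
          [apply (solution_derivatives k Hk s Hs)|apply derivable_pt_lim_const].
      + ring.
    - apply vaccinated_deficit_rate; assumption. }
  apply Rmult_le_compat_r; [left; apply exp_pos|].
  destruct (HD0 k Hk) as [_ [_ Hv0]]. apply Rabs_le_bounds in Hv0.
  pose proof (Rdiv_le_double (D * V_forcing) (mu k + omega + d - decay_rate) HK ltac:(lra)).
  cbv beta. assert (Rmax (- (V k 0 - V0 b d Phi omega mu k)) 0 <= D) by (apply Rmax_lub; lra).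
  unfold V_gain. replace (D * (1 + 2 * V_forcing / d)) with (D + 2 * (D * V_forcing) / d)
    by (field; lra). lra.
Qed.

Lemma exponential_bound k t : (1 <= k <= n)%nat -> 0 <= t ->
  Rabs (S k t - S0 b d Phi omega mu k) <= D * total_gain * exp (- decay_rate * t) /\
  Rabs (V k t - V0 b d Phi omega mu k) <= D * total_gain * exp (- decay_rate * t) /\
  Rabs (I k t) <= D * total_gain * exp (- decay_rate * t) /\
  Rabs (Q k t) <= D * total_gain * exp (- decay_rate * t).
Proof.
  intros Hk Ht.
  pose proof (vaccinated_upper k t Hk Ht). pose proof (vaccinated_lower k t Hk Ht).
  pose proof (infected_decay k t Hk Ht). pose proof (quarantined_decay k t Hk Ht).
  destruct (solution_nonneg k Hk t Ht) as [_ [_ [? ?]]].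
  pose proof (total_population k Hk t Ht). pose proof (S0_plus_V0 k Hk).
  pose proof D_nonneg. pose proof I_gain_pos. pose proof Q_gain_ge_1. pose proof V_gain_ge_1.
  set (E := exp (- decay_rate * t)) in *. assert (0 < E) by apply exp_pos.
  assert (D * E <= D * V_gain * E) by nra.
  assert (0 <= D * I_gain * E) by nra. assert (0 <= D * Q_gain * E) by nra.
  assert (Htot : D * total_gain * E = D * V_gain * E + D * I_gain * E + D * Q_gain * E)
    by (unfold total_gain; ring).
  rewrite Htot. repeat split; apply Rabs_le; lra.
Qed.

Lemma near_E0_of_decay eps t : 0 <= t ->
  D * total_gain * exp (- decay_rate * t) < eps -> near_E0 n b d Phi omega mu S V I Q eps t.
Proof.
  intros Ht Hlt k Hk. destruct (exponential_bound k t Hk Ht) as [? [? [? ?]]].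
  repeat split; lra.
Qed.

End Decay.

End Solution.

End SVIQS.

Theorem theorem4p7 (n : nat) (p lam phi mu : nat -> R)
    (b d Phi beta gamma eta omega delta : R) :
  (1 <= n)%nat ->
  (forall k, (1 <= k <= n)%nat -> 0 < p k) ->
  sumk n p = 1 ->
  0 < d -> d < b ->
  0 < Phi ->
  Phi = / avgk n p * sumk n (fun i => INR i * p i * b * Phi / (d + b * INR i * Phi)) ->
  (forall k, (1 <= k <= n)%nat -> 0 < lam k /\ 0 < phi k /\ 0 < mu k) ->
  0 < beta -> 0 < gamma -> 0 < eta -> 0 < omega ->
  0 <= delta <= 1 ->
  R0tilde n p lam phi b d Phi beta gamma < 1 ->
  (* Lyapunov stability (within the feasible region) *)
  (forall eps, 0 < eps -> exists del, 0 < del /\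
     forall S V I Q : nat -> R -> R,
       is_solution n p lam phi mu b d Phi beta gamma eta omega delta S V I Q ->
       admissible_init n b d Phi S V I Q ->
       near_E0 n b d Phi omega mu S V I Q del 0 ->
       forall t, 0 <= t -> near_E0 n b d Phi omega mu S V I Q eps t)
  /\
  (* global attractivity *)
  (forall S V I Q : nat -> R -> R,
     is_solution n p lam phi mu b d Phi beta gamma eta omega delta S V I Q ->
     admissible_init n b d Phi S V I Q ->
     forall eps, 0 < eps -> exists T, forall t, T <= t ->
       near_E0 n b d Phi omega mu S V I Q eps t).
Proof.
  intros Hn Hp _ Hd Hdb HPhi _ Hpar Hbeta Hgamma Heta Homega Hdelta HR0.
  pose proof (decay_rate_pos n p lam phi b d Phi beta gamma Hd Hbeta Hgamma HR0) as Hr.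
  pose proof (total_gain_nonneg n p lam phi mu d beta Hn Hp Hd Hpar Hbeta) as HC.
  pose proof (near_E0_of_decay n p lam phi mu b d Phi beta gamma eta omega delta
    Hn Hp Hd Hdb HPhi Hpar Hbeta Hgamma Heta Homega Hdelta HR0) as Hnear.
  set (r := decay_rate n p lam phi b d Phi beta gamma) in *.
  set (C := total_gain n p lam phi mu d beta) in *.
  split.
  - intros eps Heps. exists (eps / (C + 1)). split; [apply Rdiv_lt_0_compat; lra|].
    intros S V I Q Hsol Hinit H0 t Ht.
    apply (Hnear S V I Q Hsol Hinit (eps / (C + 1))); [|exact Ht|].
    + intros j Hj. destruct (H0 j Hj) as [_ [? [? ?]]].
      pose proof (Rle_abs (I j 0)). pose proof (Rle_abs (Q j 0)). repeat split; lra.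
    + apply Rdiv_succ_mul_lt; [lra|lra|]. split; [left; apply exp_pos|].
      apply exp_scal_le_1; lra.
  - intros S V I Q Hsol Hinit eps Heps.
    destruct (exp_decay_eventually_lt C r eps HC Hr Heps) as [T HT].
    exists (Rmax 0 T). intros t Ht. pose proof (Rmax_l 0 T). pose proof (Rmax_r 0 T).
    apply (Hnear S V I Q Hsol Hinit 1);
      [exact (initial_distance_le_1 n lam phi mu b d Phi omega Hn Hd Hdb HPhi Hpar Homega
                S V I Q Hinit)|lra|].
    rewrite Rmult_1_l. apply HT. lra.
Qed.
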